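(* Let $[\cdot]_{\mathbb{R}}:\mathbb{C}^d\to\mathbb{R}^{2d}$ be the map $v\mapsto\begin{pmatrix}\operatorname{Re}v\\ \operatorname{Im}v\end{pmatrix}$. Let $v_1,\dots,v_n\in\mathbb{C}^d$. (1) If $([v_1]_{\mathbb{R}},\dots,[v_n]_{\mathbb{R}})$ is a tight frame for $\mathbb{R}^{2d}$, then $(v_1,\dots,v_n)$ is a tight frame for $\mathbb{C}^d$. (2) If $(v_1,\dots,v_n)$ is a tight frame for $\mathbb{C}^d$, then $([v_j]_{\mathbb{R}})_{j=1}^n$ is a tight frame for $\mathbb{R}^{2d}$ if and only if $$\sum_j\sum_k\langle v_j,v_k\rangle^2=0,$$ equivalently, if and only if $\sum_j\sum_k(\operatorname{Re}\langle v_j,v_k\rangle)^2=\sum_j\sum_k(\operatorname{Im}\langle v_j,v_k\rangle)^2$.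
   Context: $\operatorname{Re}v,\operatorname{Im}v\in\mathbb{R}^d$ are the entrywise real and imaginary parts of $v\in\mathbb{C}^d$. Inner products are Euclidean: $\langle v,w\rangle=\sum_j\overline{w_j}v_j$. A sequence $(u_j)$ in $\mathbb{F}^D$ is a tight frame for $\mathbb{F}^D$ if there is $A>0$ with $A\|u\|^2=\sum_j|\langle u,u_j\rangle|^2$ for all $u\in\mathbb{F}^D$. *)

From HB Require Import structures.
From mathcomp Require Import all_boot all_order all_algebra.
From mathcomp Require Import complex.
Set Implicit Arguments. Unset Strict Implicit. Unset Printing Implicit Defensive.
Import Order.TTheory GRing.Theory Num.Theory.
Local Open Scope ring_scope.

Definition rinner (R : rcfType) (D : nat) (u w : 'cV[R]_D) : R :=
  \sum_(i < D) u i 0 * w i 0.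

Definition cinner (R : rcfType) (d : nat) (v w : 'cV[R[i]]_d) : R[i] :=
  \sum_(i < d) (w i 0)^* * v i 0.

Definition rtight_frame (R : rcfType) (D n : nat) (u : 'I_n -> 'cV[R]_D) : Prop :=
  exists A : R, 0 < A /\
    forall x : 'cV[R]_D,
      A * (\sum_(i < D) `|x i 0| ^+ 2) = \sum_(j < n) `|rinner x (u j)| ^+ 2.

Definition ctight_frame (R : rcfType) (d n : nat) (v : 'I_n -> 'cV[R[i]]_d) : Prop :=
  exists A : R, 0 < A /\
    forall x : 'cV[R[i]]_d,
      (A%:C)%C * (\sum_(i < d) `|x i 0| ^+ 2) = \sum_(j < n) `|cinner x (v j)| ^+ 2.

Definition realify (R : rcfType) (d : nat) (v : 'cV[R[i]]_d) : 'cV[R]_(d + d) :=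
  col_mx (map_mx (@complex.Re R) v) (map_mx (@complex.Im R) v).

(* Write <.,.> for the Hermitian inner product, |x|^2 for the squared norm of
   x in C^d, and a_j(x) = Re <x, v_j>, b_j(x) = Im <x, v_j>.  Since
   <[x]_R, [w]_R> = Re <x, w> and [.]_R is onto, ([v_j]_R) is B-tight iff
   B |x|^2 = sum_j a_j(x)^2 for all x, whereas (v_j) is A-tight iff
   A |x|^2 = sum_j (a_j(x)^2 + b_j(x)^2).

   (1) Rotating x to x*i turns a_j into -b_j, so a B-tight realification
       also gives B |x|^2 = sum_j b_j(x)^2, and (v_j) is 2B-tight.
   (2) Let S = sum_(j,k) <v_j,v_k>^2 and N = sum_j v_j v_j^T (a complex
       symmetric d x d matrix).  Then S = sum_(a,b) |N_ab|^2 (expand the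
       squares) and S is real with Re S = T - U, where T and U are the sums
       of the squared real and imaginary parts of the Gram entries.
       - If the realification is tight, evaluating the two identities of (1)
         at x = v_k and summing over k gives T = U, i.e. S = 0.
       - If S = 0 then N = 0, hence Q(x) = sum_j <x,v_j>^2 = x^T conj(N) x
         vanishes; its real part is sum_j (a_j^2 - b_j^2), so an A-tight
         (v_j) has a realification that is (A/2)-tight. *)
From HB Require Import structures.
From mathcomp Require Import all_boot all_order all_algebra.
From mathcomp Require Import complex ring lra.
Import Order.TTheory GRing.Theory Num.Theory.
Local Open Scope ring_scope.
Set Implicit Arguments. Unset Strict Implicit. Unset Printing Implicit Defensive.

Section ComplexParts.
Variable R : rcfType.
Local Notation C := R[i].
Local Notation Re := (@complex.Re R).
Local Notation Im := (@complex.Im R).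

Lemma Re_sum I (r : seq I) (P : pred I) (F : I -> C) :
  Re (\sum_(i <- r | P i) F i) = \sum_(i <- r | P i) Re (F i).
Proof. by apply: (big_morph _ _ (erefl _)) => [[a b] [c e]]. Qed.

Lemma ReM (x y : C) : Re (x * y) = Re x * Re y - Im x * Im y.
Proof. by case: x => a b; case: y. Qed.

Lemma ReJ (x : C) : Re (x^*)%C = Re x. Proof. by case: x. Qed.

Lemma ImJ (x : C) : Im (x^*)%C = - Im x. Proof. by case: x. Qed.

Lemma conjc_fixed_real (z : C) : (z^*)%C = z -> z = (Re z)%:C%C.
Proof. by case: z => a b [Nbb]; apply/eqP; rewrite eq_complex /= eqxx; apply/eqP; lra. Qed.

Lemma sqr_normc_parts (z : C) : `|z| ^+ 2 = ((Re z) ^+ 2 + (Im z) ^+ 2)%:C%C.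
Proof. by rewrite add_Re2_Im2. Qed.

End ComplexParts.

Lemma sum2_sqr_norm_eq0 (K : numDomainType) (m p : nat) (F : 'I_m -> 'I_p -> K) :
  \sum_(a < m) \sum_(b < p) `|F a b| ^+ 2 = 0 -> forall a b, F a b = 0.
Proof.
move=> S0 a b; have sqr_ge0 a' b' : 0 <= `|F a' b'| ^+ 2 by rewrite exprn_ge0.
have row_ge0 a' : 0 <= \sum_(b < p) `|F a' b| ^+ 2 by apply: sumr_ge0.
have row0 : \sum_(b < p) `|F a b| ^+ 2 = 0.
  exact: (psumr_eq0P (fun a' _ => row_ge0 a') S0).
have /eqP : `|F a b| ^+ 2 = 0 by exact: (psumr_eq0P (fun b' _ => sqr_ge0 a b') row0).
by rewrite sqrf_eq0 normr_eq0 => /eqP.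
Qed.

Section RealifiedFrames.
Variables (R : rcfType) (d : nat).
Local Notation C := R[i].
Local Notation Re := (@complex.Re R).
Local Notation Im := (@complex.Im R).

Definition csqnorm (x : 'cV[C]_d) : R :=
  \sum_(i < d) (Re (x i 0) ^+ 2 + Im (x i 0) ^+ 2).

Lemma csqnormE (x : 'cV[C]_d) : \sum_(i < d) `|x i 0| ^+ 2 = (csqnorm x)%:C%C.
Proof. by rewrite /csqnorm raddf_sum; apply: eq_bigr => i _; exact: sqr_normc_parts. Qed.

Lemma rinner_realify (x w : 'cV[C]_d) :
  rinner (realify x) (realify w) = Re (cinner x w).
Proof.
rewrite /rinner big_split_ord /= /cinner Re_sum -big_split /=; apply: eq_bigr => i _.
by rewrite /realify !col_mxEu !col_mxEd !mxE ReM ReJ ImJ; ring.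
Qed.

Lemma realify_sqnorm (x : 'cV[C]_d) :
  \sum_(i < d + d) `|realify x i 0| ^+ 2 = csqnorm x.
Proof.
rewrite big_split_ord /= /csqnorm -big_split; apply: eq_bigr => i _.
by rewrite /realify !col_mxEu !col_mxEd !mxE !real_normK ?num_real.
Qed.

Lemma realify_onto (y : 'cV[R]_(d + d)) : exists x, y = realify x.
Proof.
exists (\col_i (Complex (usubmx y i 0) (dsubmx y i 0))).
rewrite -[y in LHS]vsubmxK /realify; congr col_mx; apply/matrixP => i j;
  by rewrite !mxE (ord1 j).
Qed.

Definition mulci (x : 'cV[C]_d) : 'cV[C]_d := map_mx (fun z => z * 'i%C) x.

Lemma cinner_mulci (x w : 'cV[C]_d) : cinner (mulci x) w = cinner x w * 'i%C.
Proof. by rewrite /cinner mulr_suml; apply: eq_bigr => i _; rewrite mxE mulrA. Qed.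

Lemma csqnorm_mulci (x : 'cV[C]_d) : csqnorm (mulci x) = csqnorm x.
Proof. by apply: eq_bigr => i _; rewrite mxE ReiNIm ImiRe sqrrN addrC. Qed.

Lemma cinnerC (x w : 'cV[C]_d) : cinner w x = ((cinner x w)^*)%C.
Proof.
rewrite /cinner rmorph_sum; apply: eq_bigr => i _.
by rewrite rmorphM /= conjcK mulrC.
Qed.

Variable n : nat.
Implicit Type u : 'I_n -> 'cV[C]_d.

Lemma rtight_frameE u :
  rtight_frame (fun j => realify (u j)) <->
  exists2 B : R, 0 < B & forall x, B * csqnorm x = \sum_(j < n) Re (cinner x (u j)) ^+ 2.
Proof.
have sqE x : \sum_(j < n) `|rinner (realify x) (realify (u j))| ^+ 2 =
             \sum_(j < n) Re (cinner x (u j)) ^+ 2.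
  by apply: eq_bigr => j _; rewrite rinner_realify real_normK ?num_real.
split=> [[B [B0 HB]]|[B B0 HB]].
  by exists B => // x; rewrite -realify_sqnorm HB sqE.
exists B; split => // x.
by have [z ->] := realify_onto x; rewrite realify_sqnorm HB sqE.
Qed.

Lemma ctight_frameE u :
  ctight_frame u <->
  exists2 A : R, 0 < A & forall x, A * csqnorm x =
     \sum_(j < n) (Re (cinner x (u j)) ^+ 2 + Im (cinner x (u j)) ^+ 2).
Proof.
have sqE x : \sum_(j < n) `|cinner x (u j)| ^+ 2 =
   (\sum_(j < n) (Re (cinner x (u j)) ^+ 2 + Im (cinner x (u j)) ^+ 2))%:C%C.
  by rewrite raddf_sum; apply: eq_bigr => j _; exact: sqr_normc_parts.
split=> [[A [A0 HA]]|[A A0 HA]].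
  by exists A => // x; have := HA x; rewrite csqnormE sqE -rmorphM => /complexI.
by exists A; split => // x; rewrite csqnormE sqE -rmorphM HA.
Qed.

(* A B-tight realification controls the imaginary parts as well: apply the
   defining identity to x * i. *)
Lemma rtight_Im u (B : R) :
  (forall x, B * csqnorm x = \sum_(j < n) Re (cinner x (u j)) ^+ 2) ->
  forall x, B * csqnorm x = \sum_(j < n) Im (cinner x (u j)) ^+ 2.
Proof.
move=> HB x; rewrite -csqnorm_mulci HB.
by apply: eq_bigr => j _; rewrite cinner_mulci ReiNIm sqrrN.
Qed.

Lemma rtight_ctight u :
  rtight_frame (fun j => realify (u j)) -> ctight_frame u.
Proof.
case/rtight_frameE=> B B0 HRe; have HIm := rtight_Im HRe.
apply/ctight_frameE; exists (B + B) => [|x]; first by rewrite addr_gt0.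
by rewrite big_split /= -HRe -HIm mulrDl.
Qed.

Lemma ctight_rtight u :
  ctight_frame u ->
  (forall x, Re (\sum_(j < n) cinner x (u j) ^+ 2) = 0) ->
  rtight_frame (fun j => realify (u j)).
Proof.
case/ctight_frameE=> A A0 HA HQ; apply/rtight_frameE.
exists (A / 2) => [|x]; first by rewrite divr_gt0.
have := HQ x; rewrite Re_sum.
under eq_bigr do rewrite expr2 ReM -!expr2.
move: (HA x); rewrite sumrB big_split /=; lra.
Qed.

Lemma gram_sqr_sum_real u :
  \sum_(j < n) \sum_(k < n) cinner (u j) (u k) ^+ 2 =
  (\sum_(j < n) \sum_(k < n) Re (cinner (u j) (u k)) ^+ 2 -
   \sum_(j < n) \sum_(k < n) Im (cinner (u j) (u k)) ^+ 2)%:C%C.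
Proof.
set S := (X in X = _).
have -> : S = (Re S)%:C%C.
  apply: conjc_fixed_real; rewrite /S rmorph_sum.
  under eq_bigr do rewrite rmorph_sum.
  rewrite exchange_big; apply: eq_bigr => j _; apply: eq_bigr => k _.
  by rewrite rmorphXn /= -cinnerC.
congr (_ %:C)%C; rewrite /S Re_sum -sumrB; apply: eq_bigr => j _.
by rewrite Re_sum -sumrB; apply: eq_bigr => k _; rewrite expr2 ReM -!expr2.
Qed.

(* Part (2), necessity: a tight realification balances T and U, by summing
   the identities of (1) at x = u_k. *)
Lemma rtight_gram_balanced u :
  rtight_frame (fun j => realify (u j)) ->
  \sum_(j < n) \sum_(k < n) Re (cinner (u j) (u k)) ^+ 2 =
  \sum_(j < n) \sum_(k < n) Im (cinner (u j) (u k)) ^+ 2.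
Proof.
case/rtight_frameE=> B _ HRe; have HIm := rtight_Im HRe.
by apply: eq_bigr => j _; rewrite -HRe -HIm.
Qed.

Definition sym_frame_op u (a b : 'I_d) : C := \sum_(j < n) u j a 0 * u j b 0.

Lemma gram_sqr_sum_frobenius u :
  \sum_(j < n) \sum_(k < n) cinner (u j) (u k) ^+ 2 =
  \sum_(a < d) \sum_(b < d) `|sym_frame_op u a b| ^+ 2.
Proof.
rewrite /sym_frame_op; transitivity (\sum_(j < n) \sum_(k < n) \sum_(a < d) \sum_(b < d)
    ((u k a 0)^* * u j a 0) * ((u k b 0)^* * u j b 0))%C.
  by apply: eq_bigr => j _; apply: eq_bigr => k _; rewrite /cinner expr2 big_distrlr.
under eq_bigr do rewrite exchange_big /=.
rewrite exchange_big /=; apply: eq_bigr => a _.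
under eq_bigr do rewrite exchange_big /=.
rewrite exchange_big /=; apply: eq_bigr => b _; rewrite sqr_normc rmorph_sum big_distrlr /=.
apply: eq_bigr => j _; apply: eq_bigr => k _.
by rewrite !rmorphM /=; ring.
Qed.

Lemma frame_quadE u (x : 'cV[C]_d) :
  \sum_(j < n) cinner x (u j) ^+ 2 =
  \sum_(a < d) \sum_(b < d) x a 0 * x b 0 * ((sym_frame_op u a b)^*)%C.
Proof.
rewrite /cinner; under eq_bigr do rewrite expr2 big_distrlr /=.
rewrite exchange_big /=; apply: eq_bigr => a _.
rewrite exchange_big /=; apply: eq_bigr => b _.
rewrite /sym_frame_op rmorph_sum mulr_sumr; apply: eq_bigr => j _.
by rewrite rmorphM /=; ring.
Qed.

(* Part (2), sufficiency: if S = 0 then N = 0, so the quadratic form vanishes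
   and the realification of a tight frame is tight. *)
Lemma gram_sqr_sum0_rtight u :
  ctight_frame u ->
  \sum_(j < n) \sum_(k < n) cinner (u j) (u k) ^+ 2 = 0 ->
  rtight_frame (fun j => realify (u j)).
Proof.
move=> Hu; rewrite gram_sqr_sum_frobenius => S0.
have N0 := sum2_sqr_norm_eq0 S0.
apply: ctight_rtight => // x; rewrite frame_quadE big1 // => a _.
by rewrite big1 // => b _; rewrite N0 conjc0 mulr0.
Qed.

Lemma gram_sqr_sum_eq0 u :
  \sum_(j < n) \sum_(k < n) cinner (u j) (u k) ^+ 2 = 0 <->
  \sum_(j < n) \sum_(k < n) Re (cinner (u j) (u k)) ^+ 2 =
  \sum_(j < n) \sum_(k < n) Im (cinner (u j) (u k)) ^+ 2.
Proof.
rewrite gram_sqr_sum_real; split=> [/complexI/eqP|->]; last by rewrite subrr.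
by rewrite subr_eq0 => /eqP.
Qed.

Lemma rtight_iff_balanced u :
  ctight_frame u ->
  rtight_frame (fun j => realify (u j)) <->
  \sum_(j < n) \sum_(k < n) Re (cinner (u j) (u k)) ^+ 2 =
  \sum_(j < n) \sum_(k < n) Im (cinner (u j) (u k)) ^+ 2.
Proof.
move=> Hu; split; first exact: rtight_gram_balanced.
by move/gram_sqr_sum_eq0; exact: gram_sqr_sum0_rtight.
Qed.

End RealifiedFrames.

Theorem theorem8 (R : rcfType) (d n : nat) (v : 'I_n -> 'cV[R[i]]_d) :
  (rtight_frame (fun j => realify (v j)) -> ctight_frame v) /\
  (ctight_frame v ->
     (rtight_frame (fun j => realify (v j)) <->
        \sum_(j < n) \sum_(k < n) (cinner (v j) (v k)) ^+ 2 = 0) /\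
     (rtight_frame (fun j => realify (v j)) <->
        \sum_(j < n) \sum_(k < n) (complex.Re (cinner (v j) (v k))) ^+ 2 =
        \sum_(j < n) \sum_(k < n) (complex.Im (cinner (v j) (v k))) ^+ 2)).
Proof.
split; first exact: rtight_ctight.
move=> Hv; have balanced := rtight_iff_balanced Hv.
split; last exact: balanced.
exact: iff_trans balanced (iff_sym (gram_sqr_sum_eq0 v)).
Qed.
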